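(* For every bracket pattern $w$, $A(w)=\bigcup_{w'\in\langle\!\langle w\rangle\!\rangle}w'$, and this set belongs to $\langle\!\langle w\rangle\!\rangle$.
   Context: $\mathbb N=\{1,2,\dots\}$, $\mathbb N_0=\mathbb N\cup\{0\}$. A bracket pattern is a non-empty finite subset $w\subseteq\mathbb N$; $\|w\|:=\max(w)$. For bracket patterns $w,w'$: superposition $w\cup w'$; for $j\in w$ the projection $\cap_j w:=\{i\in w\mid i\le j\}$; the dual $w^\dagger:=\{\|w\|-i\mid i\in\mathbb N_0,\ i<\|w\|,\ i\notin w\}$. A bracket pattern category is a set of bracket patterns closed under superposition, duals and projections; $\langle\!\langle w\rangle\!\rangle$ denotes the smallest bracket pattern category containing $w$. The completion of a bracket pattern $w$ is $A(w):=\{j-i\mid j\in w,\ i\in\mathbb N_0,\ i\notin w,\ i<j\}$. *)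

From mathcomp Require Import all_boot.
From mathcomp Require Export finmap.
Set Implicit Arguments. Unset Strict Implicit. Unset Printing Implicit Defensive.
Local Open Scope fset_scope.

Definition is_bp (w : {fset nat}) : bool := (w != fset0) && (0 \notin w).

Definition bnorm (w : {fset nat}) : nat := \max_(i <- w) i.

Definition bsup (w w' : {fset nat}) : {fset nat} := w `|` w'.

Definition bproj (j : nat) (w : {fset nat}) : {fset nat} :=
  [fset i in w | i <= j].

Definition bdual (w : {fset nat}) : {fset nat} :=
  [fset bnorm w - i | i in [seq i <- iota 0 (bnorm w) | i \notin w]].

Definition completion (w : {fset nat}) : {fset nat} :=
  [fset j - i | j in w, i in [seq i <- iota 0 j | i \notin w]].

Definition is_bp_category (C : {fset nat} -> Prop) : Prop :=
  [/\ (forall w, C w -> is_bp w),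
      (forall w w', C w -> C w' -> C (bsup w w')),
      (forall w, C w -> C (bdual w)) &
      (forall w j, C w -> j \in w -> C (bproj j w))].

(* <<w>>: the smallest bracket pattern category containing w
   (intersection of all bracket pattern categories containing w) *)
Definition generated (w : {fset nat}) (w' : {fset nat}) : Prop :=
  forall C, is_bp_category C -> C w -> C w'.

(* For j in w, the dual of the projection cap_j w is {j - i | i < j, i notin w}, so A(w)
   is the superposition of these duals over j in w and lies in <<w>>.  Conversely every
   pattern is contained in its completion, and completion does not grow under
   superposition, projection or duals; hence the patterns whose completion is contained
   in A(w) form a bracket pattern category containing w, and every member of <<w>> is
   contained in A(w). *)
From mathcomp Require Import all_boot finmap zify.
Local Open Scope fset_scope.
Set Implicit Arguments. Unset Strict Implicit.

Lemma completionP w x :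
  reflect (exists j i, [/\ j \in w, i < j, i \notin w & x = j - i]) (x \in completion w).
Proof.
apply: (iffP (imfset2P _ _ _ _ _)).
- move=> [j jw [i]]; rewrite /= mem_filter mem_iota => /andP[iw ij] ->.
  by exists j, i.
- move=> [j [i [jw ij iw ->]]]; exists j => //; exists i => //.
  by rewrite /= mem_filter mem_iota iw.
Qed.

Lemma bdualP w x :
  reflect (exists i, [/\ i < bnorm w, i \notin w & x = bnorm w - i]) (x \in bdual w).
Proof.
apply: (iffP (imfsetP _ _ _ _)).
- move=> [i]; rewrite /= mem_filter mem_iota => /andP[iw ij] ->.
  by exists i.
- move=> [i [ij iw ->]]; exists i => //.
  by rewrite /= mem_filter mem_iota iw.
Qed.

Lemma in_bproj j w x : (x \in bproj j w) = (x \in w) && (x <= j).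
Proof. by rewrite !inE. Qed.

Lemma leq_bnorm w x : x \in w -> x <= bnorm w.
Proof. by move=> xw; rewrite /bnorm (leq_bigmax_seq _ xw). Qed.

Lemma bnorm_mem w : w != fset0 -> bnorm w \in w.
Proof.
case/fset0Pn => x xw.
by rewrite /bnorm big_seq_fsetE (bigmax_eq_arg [` xw]) //; apply: fsvalP.
Qed.

Lemma bnorm_bproj j w : j \in w -> bnorm (bproj j w) = j.
Proof.
move=> jw; have jp : j \in bproj j w by rewrite in_bproj jw leqnn.
apply/eqP; rewrite eqn_leq leq_bnorm // andbT.
have /bnorm_mem : bproj j w != fset0 by apply/fset0Pn; exists j.
by rewrite in_bproj => /andP[].
Qed.

Lemma bp_category : is_bp_category is_bp.
Proof.
split=> // [a b /andP[a_n0 a0] /andP[_ b0] | a a_bp | a j /andP[_ a0] ja].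
- by rewrite /is_bp /bsup fsetU_eq0 in_fsetU negb_and a_n0 negb_or a0 b0.
- have /andP[a_n0 a0] := a_bp; have na := bnorm_mem a_n0.
  have n_gt0 : 0 < bnorm a by case: (bnorm a) na a0 => // ->.
  apply/andP; split.
    by apply/fset0Pn; exists (bnorm a); apply/bdualP; exists 0; rewrite subn0.
  by apply/bdualP => -[i [ia _]]; lia.
- apply/andP; split; last by rewrite in_bproj (negbTE a0).
  by apply/fset0Pn; exists j; rewrite in_bproj ja leqnn.
Qed.

Lemma category_bigfcup (C : {fset nat} -> Prop) (s : seq nat) (F : nat -> {fset nat}) j0 :
  is_bp_category C -> (forall j, j \in s -> C (F j)) -> j0 \in s ->
  C (\bigcup_(j <- s) F j).
Proof.
move=> [_ Csup _ _]; elim: s j0 => [|a [|b s] IH] //= j0 CF _.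
  by rewrite big_cons big_nil fsetU0; apply: CF; rewrite mem_seq1.
rewrite big_cons; apply: Csup; first by apply: CF; rewrite inE eqxx.
by apply: (IH b) => [j js|]; [apply: CF; rewrite inE js orbT | rewrite inE eqxx].
Qed.

Lemma bdual_bprojP w j x : j \in w ->
  reflect (exists i, [/\ i < j, i \notin w & x = j - i]) (x \in bdual (bproj j w)).
Proof.
move=> jw; apply: (iffP (bdualP _ _)); rewrite bnorm_bproj //.
- by move=> [i [ij]]; rewrite in_bproj (ltnW ij) andbT => iw ->; exists i.
- by move=> [i [ij iw ->]]; exists i; rewrite in_bproj (ltnW ij) andbT.
Qed.

Lemma completion_bigfcup w : completion w = \bigcup_(j <- w) bdual (bproj j w).
Proof.
apply/fsetP => x; apply/completionP/bigfcupP.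
- move=> [j [i [jw ij iw ->]]]; exists j; first by rewrite andbT.
  by apply/bdual_bprojP => //; exists i.
- by move=> [j /andP[jw _] /bdual_bprojP -/(_ jw) [i [ij iw ->]]]; exists j, i.
Qed.

Lemma generated_completion w : is_bp w -> generated w (completion w).
Proof.
move=> /andP[w_n0 _] C C_cat Cw; have [_ _ Cdual Cproj] := C_cat.
rewrite completion_bigfcup; apply: (category_bigfcup C_cat _ (bnorm_mem w_n0)).
by move=> j jw; apply/Cdual/Cproj.
Qed.

Lemma sub_completion w : is_bp w -> {subset w <= completion w}.
Proof.
move=> /andP[_ w0] x xw; apply/completionP; exists x, 0; rewrite subn0; split=> //.
by case: x xw w0 => // ->.
Qed.

Lemma completion_bsup_sub v v' :
  {subset completion (bsup v v') <= completion v `|` completion v'}.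
Proof.
move=> x /completionP[j [i [jvv' ij]]]; rewrite !in_fsetU negb_or in jvv' * => /andP[iv iv'] ->.
by apply/orP; case/orP: jvv' => jv; [left | right]; apply/completionP; exists j, i.
Qed.

Lemma completion_bproj_sub j v : {subset completion (bproj j v) <= completion v}.
Proof.
move=> x /completionP[k [i [kp ik]]]; rewrite !in_bproj in kp * => iNp ->.
case/andP: kp => kv kj; move: iNp; rewrite (ltnW (leq_trans ik kj)) andbT => iv.
by apply/completionP; exists k, i.
Qed.

Lemma completion_bdual_sub v : is_bp v -> {subset completion (bdual v) <= completion v}.
Proof.
move=> /andP[v_n0 _] x /completionP[j [i [/bdualP[k [kn kv ->]] ik iNd ->]]].
set n := bnorm v in kn ik iNd *.
have ni_v : n - i \in v.
  case: (posnP i) => [->|i_gt0]; first by rewrite subn0 bnorm_mem.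
  by apply: contraR iNd => niNv; apply/bdualP; exists (n - i); split => //; lia.
by apply/completionP; exists (n - i), k; split => //; lia.
Qed.

Definition completion_within w v := is_bp v /\ {subset completion v <= completion w}.

Lemma completion_within_category w : is_bp_category (completion_within w).
Proof.
have [_ bp_bsup bp_bdual bp_bproj] := bp_category; split.
- by move=> v [].
- move=> a b [a_bp Ha] [b_bp Hb]; split; first exact: bp_bsup.
  by move=> y /completion_bsup_sub; rewrite in_fsetU => /orP[/Ha|/Hb].
- move=> a [a_bp Ha]; split; first exact: bp_bdual.
  by move=> y /(completion_bdual_sub a_bp) /Ha.
- move=> a j [a_bp Ha] ja; split; first exact: bp_bproj.
  by move=> y /completion_bproj_sub /Ha.
Qed.

Lemma generated_sub_completion w w' :
  is_bp w -> generated w w' -> {subset w' <= completion w}.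
Proof.
move=> w_bp gw'; have [w'_bp Hw'] : completion_within w w'.
  by apply: gw'; [exact: completion_within_category | split].
by move=> x /(sub_completion w'_bp) /Hw'.
Qed.

Unset Implicit Arguments.
Theorem lemma7p8 (w : {fset nat}) :
  is_bp w ->
  (forall x : nat, x \in completion w <-> exists w', generated w w' /\ x \in w')
  /\ generated w (completion w).
Proof.
move=> w_bp; have gA := generated_completion w_bp.
split=> // x; split; first by exists (completion w).
by move=> [w' [gw' xw']]; apply: generated_sub_completion gw' x xw'.
Qed.
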